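(* For every path $P$ on at least $4$ vertices, $4\le\pi_T(P)\le 5$.
   Context: A sequence is nonrepetitive if no block of consecutive terms has the form $r_1\dots r_nr_1\dots r_n$ with $n\ge1$. A (strong) total Thue colouring of a graph $G$ is a colouring of $V(G)\cup E(G)$ such that for every path $v_1,e_1,v_2,\dots,e_{k-1},v_k$ in $G$ the sequence of colours of $v_1,e_1,\dots,v_k$ is nonrepetitive, the sequence of colours of $v_1,\dots,v_k$ is nonrepetitive, and the sequence of colours of $e_1,\dots,e_{k-1}$ is nonrepetitive. $\pi_T(G)$ is the minimum number of colours in a total Thue colouring of $G$. *)

From mathcomp Require Import all_boot.
Set Implicit Arguments. Unset Strict Implicit. Unset Printing Implicit Defensive.

Definition nonrepetitive (s : seq nat) : Prop :=
  forall i m : nat, 0 < m -> i + 2 * m <= size s ->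
    take m (drop i s) <> take m (drop (i + m) s).

Definition simple_graph (T : finType) (adj : rel T) : Prop :=
  symmetric adj /\ irreflexive adj.

Definition is_gpath (T : finType) (adj : rel T) (x : T) (p : seq T) : Prop :=
  path adj x p /\ uniq (x :: p).

Fixpoint total_seq (T : finType) (cv : T -> nat) (ce : T -> T -> nat)
    (x : T) (p : seq T) : seq nat :=
  cv x :: (if p is y :: p' then ce x y :: total_seq cv ce y p' else [::]).

Definition total_thue_colouring (T : finType) (adj : rel T) (k : nat)
    (cv : T -> nat) (ce : T -> T -> nat) : Prop :=
  (forall v, cv v < k) /\
  (forall u v, adj u v -> ce u v < k) /\
  (forall u v, adj u v -> ce u v = ce v u) /\
  (forall x p, is_gpath adj x p ->
     [/\ nonrepetitive (total_seq cv ce x p),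
         nonrepetitive (map cv (x :: p)) &
         nonrepetitive (pairmap ce x p)]).

Definition total_thue_colourable (T : finType) (adj : rel T) (k : nat) : Prop :=
  exists cv ce, total_thue_colouring adj k cv ce.

Definition is_piT (T : finType) (adj : rel T) (k : nat) : Prop :=
  total_thue_colourable adj k /\ forall j, j < k -> ~ total_thue_colourable adj j.

Arguments is_piT : clear implicits.
Definition path_adj (n : nat) : rel 'I_n :=
  fun i j => (i.+1 == j :> nat) || (j.+1 == i :> nat).
Arguments path_adj : clear implicits.

From mathcomp Require Import all_boot zify.
Set Implicit Arguments. Unset Strict Implicit. Unset Printing Implicit Defensive.

(* In fact pi_T(P_n) = 4.  Colour vertex k by the pair (t_k, t_{k+1}) of
   letters of the Thue-Morse word t, and the edge {k, k+1} by the cyclic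
   successor of that colour.  Paths in P_n are monotone, so their colour
   sequences are windows, read forwards or backwards, of the sequences of vertex
   colours, of edge colours and of their interleaving.  The first two are
   square-free because t is overlap-free.  In the interleaving a square of even
   period is a square in one of them; for a square of odd period m, the parity
   of the colour at position q records whether t changes at q/2, and comparing
   q with q + m forces t to contain a cube.  Three colours do not suffice
   already on P_4, by exhaustive search. *)

Fixpoint thue_morse_fuel (fuel n : nat) : bool :=
  if fuel is f.+1 then (if n is 0 then false else odd n (+) thue_morse_fuel f n./2)
  else false.

Definition thue_morse (n : nat) : bool := thue_morse_fuel n n.

Lemma thue_morse_fuel_stable f g n :
  n <= f -> n <= g -> thue_morse_fuel f n = thue_morse_fuel g n.
Proof.
elim: f g n => [|f IHf] [|g] [|n] //= lenf leng.
by rewrite (IHf g) //; lia.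
Qed.

Lemma thue_morse_half n : thue_morse n = odd n (+) thue_morse n./2.
Proof.
case: n => [//|n]; rewrite /thue_morse /=.
by rewrite (@thue_morse_fuel_stable n n.+1./2) //; lia.
Qed.

Lemma thue_morse_double_add k (b : bool) :
  thue_morse (k.*2 + b) = b (+) thue_morse k.
Proof.
rewrite thue_morse_half oddD odd_double addFb oddb.
by have -> : (k.*2 + b)./2 = k by case: b; lia.
Qed.

Lemma thue_morse_double k : thue_morse k.*2 = thue_morse k.
Proof. by rewrite -[k.*2]addn0 (thue_morse_double_add k false). Qed.

Lemma thue_morse_doubleS k : thue_morse k.*2.+1 = ~~ thue_morse k.
Proof. by rewrite -addn1 (thue_morse_double_add k true). Qed.

Definition tm_switch (k : nat) : bool := thue_morse k != thue_morse k.+1.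

Lemma tm_switch_double k : tm_switch k.*2.
Proof. by rewrite /tm_switch thue_morse_double thue_morse_doubleS; case: thue_morse. Qed.

Lemma tm_switch_doubleS k : tm_switch k.*2.+1 = ~~ tm_switch k.
Proof.
by rewrite /tm_switch -doubleS thue_morse_doubleS thue_morse_double; do 2!case: thue_morse.
Qed.

Lemma tm_switch_even k : ~~ odd k -> tm_switch k.
Proof. by move=> k_even; rewrite -[k]odd_double_half (negbTE k_even) tm_switch_double. Qed.

Lemma tm_switch_or_succ k : tm_switch k || tm_switch k.+1.
Proof.
have [k_odd|k_even] := boolP (odd k); last by rewrite tm_switch_even.
by rewrite (@tm_switch_even k.+1) ?orbT //= k_odd.
Qed.

Lemma tm_switch_odd_pair k : ~~ (tm_switch k.*2.+1 && tm_switch k.*2.+3).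
Proof.
have -> : k.*2.+3 = k.+1.*2.+1 by rewrite doubleS.
by rewrite !tm_switch_doubleS -negb_or tm_switch_or_succ.
Qed.

Lemma thue_morse_overlap_free i m : 0 < m ->
  ~ (forall j, j <= m -> thue_morse (i + j) = thue_morse (i + m + j)).
Proof.
elim/ltn_ind: m i => m IHm i m_gt0 overlap.
have [m_odd|m_even] := boolP (odd m); last first.
  have m_half_gt0 : 0 < m./2 by lia.
  apply: (IHm m./2 _ i./2 m_half_gt0) => [|l le_l]; first by lia.
  have le_2l : l.*2 <= m by lia.
  have := overlap l.*2 le_2l.
  rewrite (_ : i + l.*2 = (i./2 + l).*2 + odd i); last by lia.
  rewrite (_ : i + m + l.*2 = (i./2 + m./2 + l).*2 + odd i); last by lia.
  by rewrite !thue_morse_double_add => /addbI.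
have switch_period j : j < m -> tm_switch (i + j) = tm_switch (i + m + j).
  by move=> lt_jm; rewrite /tm_switch -!addnS !overlap //; lia.
have switch_pair j : j < m -> tm_switch (i + j) && tm_switch (i + m + j).
  move=> lt_jm; rewrite -switch_period // andbb.
  have [ij_odd|ij_even] := boolP (odd (i + j)); last exact: tm_switch_even.
  by rewrite switch_period // tm_switch_even //; lia.
have switch_window q : i <= q < i + m.*2 -> tm_switch q.
  move=> /andP[le_iq lt_q]; have [lt_q_im|le_im_q] := ltnP q (i + m).
    have lt_qi : q - i < m by lia.
    by have /andP[+ _] := switch_pair _ lt_qi; rewrite subnKC.
  have lt_qim : q - (i + m) < m by lia.
  by have /andP[_ +] := switch_pair _ lt_qim; rewrite subnKC.
have [m1|m_gt1] := eqVneq m 1.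
  have /switch_window : i <= i < i + m.*2 by lia.
  have := overlap 0 isT; rewrite m1 !addn0 addn1 /tm_switch => ->.
  by rewrite eqxx.
apply/negP: (tm_switch_odd_pair i./2).
by rewrite !switch_window //; lia.
Qed.

Definition squarefree (f : nat -> nat) : Prop :=
  forall p m, 0 < m -> ~ (forall j, j < m -> f (p + j) = f (p + m + j)).

Lemma squarefree_comp (g f : nat -> nat) :
  (forall x y, g (f x) = g (f y) -> f x = f y) -> squarefree f -> squarefree (g \o f).
Proof. by move=> g_inj f_sqf p m m_gt0 sq; apply: (f_sqf p m m_gt0) => j /sq /g_inj. Qed.

Definition pair_colour (a b : bool) : nat :=
  if a then (if b then 0 else 3) else (if b then 1 else 2).

Lemma pair_colour_inj a b c d : pair_colour a b = pair_colour c d -> a = c /\ b = d.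
Proof. by case: a; case: b; case: c; case: d. Qed.

Definition vertex_colour (k : nat) : nat := pair_colour (thue_morse k) (thue_morse k.+1).
Definition edge_colour (k : nat) : nat := (vertex_colour k).+1 %% 4.

Lemma vertex_colour_lt4 k : vertex_colour k < 4.
Proof. by rewrite /vertex_colour; do 2!case: thue_morse. Qed.

Lemma odd_vertex_colour k : odd (vertex_colour k) = tm_switch k.
Proof. by rewrite /vertex_colour /tm_switch; do 2!case: thue_morse. Qed.

Lemma odd_edge_colour k : odd (edge_colour k) = ~~ tm_switch k.
Proof. by rewrite /edge_colour /vertex_colour /tm_switch; do 2!case: thue_morse. Qed.

Lemma squarefree_vertex_colour : squarefree vertex_colour.
Proof.
move=> p m m_gt0 sq; apply: (@thue_morse_overlap_free p m m_gt0) => j le_jm.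
have [lt_jm|eq_jm] := ltnP j m; first by have [] := pair_colour_inj (sq j lt_jm).
have lt_pred : m.-1 < m by lia.
have [_] := pair_colour_inj (sq m.-1 lt_pred).
by rewrite -!addnS prednK // (_ : j = m) //; lia.
Qed.

Lemma squarefree_edge_colour : squarefree edge_colour.
Proof.
apply: (@squarefree_comp (fun c => c.+1 %% 4)) squarefree_vertex_colour => x y.
by have := vertex_colour_lt4 x; have := vertex_colour_lt4 y; lia.
Qed.

Definition interleave (f g : nat -> nat) (q : nat) : nat :=
  if odd q then g q./2 else f q./2.

Lemma interleave_double_add f g k (b : bool) :
  interleave f g (k.*2 + b) = if b then g k else f k.
Proof.
rewrite /interleave oddD odd_double oddb.
by have -> : (k.*2 + b)./2 = k by case: b; lia.
Qed.

Lemma interleave_no_even_square f g p m : squarefree f -> squarefree g -> 0 < m ->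
  ~ (forall j, j < m.*2 -> interleave f g (p + j) = interleave f g (p + m.*2 + j)).
Proof.
move=> f_sqf g_sqf m_gt0 sq.
have half_sq j : j < m -> interleave f g ((p./2 + j).*2 + odd p)
                        = interleave f g ((p./2 + m + j).*2 + odd p).
  move=> lt_jm; have lt_2j : j.*2 < m.*2 by lia.
  have := sq _ lt_2j; rewrite (_ : p + j.*2 = (p./2 + j).*2 + odd p); last by lia.
  by rewrite (_ : p + m.*2 + j.*2 = (p./2 + m + j).*2 + odd p); last by lia.
move: half_sq; case: (odd p) => half_sq.
- by apply: (g_sqf p./2 m m_gt0) => j /half_sq; rewrite !interleave_double_add.
- by apply: (f_sqf p./2 m m_gt0) => j /half_sq; rewrite !interleave_double_add.
Qed.

Definition total_colour : nat -> nat := interleave vertex_colour edge_colour.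

Lemma total_colour_double k : total_colour k.*2 = vertex_colour k.
Proof. by rewrite /total_colour -[k.*2]addn0 (interleave_double_add _ _ _ false). Qed.

Lemma total_colour_doubleS k : total_colour k.*2.+1 = edge_colour k.
Proof. by rewrite /total_colour -addn1 (interleave_double_add _ _ _ true). Qed.

Lemma odd_total_colour q : odd (total_colour q) = odd q (+) tm_switch q./2.
Proof.
rewrite -[in LHS](odd_double_half q) addnC /total_colour interleave_double_add.
by case: (odd q); rewrite ?odd_edge_colour ?odd_vertex_colour.
Qed.

Lemma total_colour_neq_succ q : total_colour q != total_colour q.+1.
Proof.
rewrite -(odd_double_half q); case: (odd q); rewrite ?add0n ?add1n.
- rewrite -doubleS total_colour_double total_colour_doubleS.
  by rewrite /edge_colour /vertex_colour; do 3!case: thue_morse.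
- rewrite total_colour_double total_colour_doubleS /edge_colour.
  by have := vertex_colour_lt4 q./2; lia.
Qed.

Lemma total_colour_no_odd_square p m : odd m -> 1 < m ->
  ~ (forall j, j < m -> total_colour (p + j) = total_colour (p + m + j)).
Proof.
move=> m_odd m_gt1 sq.
have flip j : j < m -> tm_switch (p + m + j)./2 = ~~ tm_switch (p + j)./2.
  move=> lt_jm; have := congr1 odd (sq j lt_jm); rewrite !odd_total_colour.
  have -> : odd (p + m + j) = ~~ odd (p + j) by lia.
  by case: (odd (p + j)); case: tm_switch; case: tm_switch.
have const j : j < m -> tm_switch (p + j)./2 = tm_switch p./2.
  elim: j => [|j IHj] lt_jm; first by rewrite addn0.
  rewrite -IHj ?(ltnW lt_jm) //.
  have [pj_odd|pj_even] := boolP (odd (p + j)); last first.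
    by rewrite (_ : (p + j.+1)./2 = (p + j)./2) //; lia.
  apply: negb_inj; rewrite -flip // -flip ?(ltnW lt_jm) //.
  by rewrite (_ : (p + m + j.+1)./2 = (p + m + j)./2) //; lia.
have p_odd : odd p.
  apply/negP => p_even; have lt_pred : m.-1 < m by lia.
  have := flip 0 (ltnW m_gt1); rewrite !addn0 -(const _ lt_pred).
  by rewrite (_ : (p + m.-1)./2 = (p + m)./2); [case: tm_switch | lia].
have no_two_off y : tm_switch y = false -> tm_switch y.+1 = false -> False.
  by move=> y_off y1_off; have := tm_switch_or_succ y; rewrite y_off y1_off.
case p_on: (tm_switch p./2).
- apply: (no_two_off (p + m)./2).
    by have := flip 0 (ltnW m_gt1); rewrite !addn0 p_on.
  have lt_2m : 2 < m by lia.
  have := flip 2 lt_2m; rewrite const // p_on (_ : (p + m + 2)./2 = (p + m)./2.+1) //; lia.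
- apply: (no_two_off p./2 p_on).
  by have := const 1 m_gt1; rewrite p_on (_ : (p + 1)./2 = p./2.+1) //; lia.
Qed.

Lemma squarefree_total_colour : squarefree total_colour.
Proof.
move=> p m m_gt0 sq.
have [m_odd|m_even] := boolP (odd m); last first.
  have m_half : m./2.*2 = m by lia.
  apply: (interleave_no_even_square (p:=p) squarefree_vertex_colour squarefree_edge_colour
    (_ : 0 < m./2)); first by lia.
  by rewrite m_half.
have [m_gt1|m_le1] := ltnP 1 m; first exact: total_colour_no_odd_square m_odd m_gt1 sq.
have m1 : m = 1 by lia.
have := sq 0 m_gt0; rewrite m1 !addn0 addn1 => eq_succ.
by have := total_colour_neq_succ p; rewrite eq_succ eqxx.
Qed.

Lemma nonrepetitive_nth s :
  (forall i m, 0 < m -> i + 2 * m <= size s ->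
     ~ (forall j, j < m -> nth 0 s (i + j) = nth 0 s (i + m + j))) ->
  nonrepetitive s.
Proof.
move=> no_square i m m_gt0 le_s eq_halves; apply: (no_square i m m_gt0 le_s) => j lt_jm.
by have := congr1 (nth 0 ^~ j) eq_halves; rewrite !nth_take // !nth_drop.
Qed.

Lemma nonrepetitive_window f a s : squarefree f ->
  (forall k, k < size s -> nth 0 s k = f (a + k)) -> nonrepetitive s.
Proof.
move=> f_sqf s_def; apply: nonrepetitive_nth => i m m_gt0 le_s sq.
apply: (f_sqf (a + i) m m_gt0) => j lt_jm.
by have := sq j lt_jm; rewrite !s_def ?addnA //; lia.
Qed.

Lemma nonrepetitive_window_rev f c s : squarefree f -> size s <= c.+1 ->
  (forall k, k < size s -> nth 0 s k = f (c - k)) -> nonrepetitive s.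
Proof.
move=> f_sqf le_s s_def; apply: nonrepetitive_nth => i m m_gt0 le_ims sq.
apply: (f_sqf (c - (i + 2 * m).-1) m m_gt0) => j lt_jm.
have lt_mirror : m.-1 - j < m by lia.
have := sq _ lt_mirror; rewrite !s_def; try lia.
rewrite (_ : c - (i + (m.-1 - j)) = c - (i + 2 * m).-1 + m + j); last by lia.
rewrite (_ : c - (i + m + (m.-1 - j)) = c - (i + 2 * m).-1 + j); last by lia.
by move/esym.
Qed.

Lemma size_total_seq (T : finType) (cv : T -> nat) ce x p :
  size (total_seq cv ce x p) = (2 * size p).+1.
Proof. by elim: p x => [|y p IHp] x //=; rewrite IHp; lia. Qed.

Lemma nth_total_seq (T : finType) (cv : T -> nat) ce x0 x p k : k <= 2 * size p ->
  nth 0 (total_seq cv ce x p) k =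
  if odd k then ce (nth x0 (x :: p) k./2) (nth x0 p k./2) else cv (nth x0 (x :: p) k./2).
Proof.
elim: p x k => [|y p IHp] x [|[|k]] //=; try lia.
by move=> le_k; rewrite IHp ?negbK //; lia.
Qed.

Lemma path_adj_monotone n (x : 'I_n) p : is_gpath (path_adj n) x p ->
  (forall k, k <= size p -> nth x (x :: p) k = x + k :> nat) \/
  (forall k, k <= size p -> nth x (x :: p) k + k = x).
Proof.
elim: p x => [|y p IHp] x; first by left=> -[|k] // _; rewrite addn0.
rewrite /is_gpath /= => -[/andP[adj_xy path_p] /andP[x_notin uniq_p]].
have y_dir : y = x.+1 :> nat \/ x = y.+1 :> nat.
  by case/orP: adj_xy => /eqP; [left|right].
case: p IHp path_p uniq_p x_notin => [_ _ _ _|z p IHp path_p uniq_p x_notin].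
  by case: y_dir => y_dir; [left|right] => -[|[|k]] //= _; lia.
have z_neq_x : x <> z :> nat.
  by move/val_inj=> x_z; rewrite x_z !inE eqxx !orbT in x_notin.
have [up|down] := IHp y (conj path_p uniq_p).
- have y_succ : y = x.+1 :> nat by have /= := up 1 isT; case: y_dir; lia.
  left=> -[|k] le_k; first by rewrite addn0.
  by rewrite /= (set_nth_default y) ?up //; lia.
- have x_succ : x = y.+1 :> nat by have /= := down 1 isT; case: y_dir; lia.
  right=> -[|k] le_k; first by rewrite addn0.
  by rewrite /= (set_nth_default y) // addnS x_succ down.
Qed.

Section PathColouring.
Variable n : nat.

Definition path_vertex_colour (v : 'I_n) : nat := vertex_colour v.
Definition path_edge_colour (u v : 'I_n) : nat := edge_colour (minn u v).

Definition nonrepetitive_colour_seqs (x : 'I_n) (p : seq 'I_n) : Prop :=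
  [/\ nonrepetitive (total_seq path_vertex_colour path_edge_colour x p),
      nonrepetitive (map path_vertex_colour (x :: p)) &
      nonrepetitive (pairmap path_edge_colour x p)].

Lemma nonrepetitive_colour_seqs_up (x : 'I_n) (p : seq 'I_n) :
  (forall k, k <= size p -> nth x (x :: p) k = x + k :> nat) -> nonrepetitive_colour_seqs x p.
Proof.
move=> pos; split.
- apply: (nonrepetitive_window (a := x.*2) squarefree_total_colour) => k.
  rewrite size_total_seq => lt_k; rewrite (nth_total_seq _ _ x); last by lia.
  (* The finType lemmas on [total_seq] state [size p] at a sort of ['I_n] that
     is convertible, but not syntactically equal, to the one in [pos]; [set]
     merges the two so that [lia] sees a single atom. *)
  set len := size p in pos lt_k *.
  rewrite /total_colour /interleave oddD odd_double /=.
  have -> : (x.*2 + k)./2 = x + k./2 by lia.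
  rewrite /path_edge_colour /path_vertex_colour pos; last by lia.
  case: ifP => k_odd //.
  rewrite -[nth x p _]/(nth x (x :: p) k./2.+1) pos; last by lia.
  by rewrite addnS (minn_idPl (leqnSn _)).
- apply: (nonrepetitive_window (a := x) squarefree_vertex_colour) => k.
  by rewrite size_map => lt_k; rewrite (nth_map x) // /path_vertex_colour pos.
- apply: (nonrepetitive_window (a := x) squarefree_edge_colour) => k.
  rewrite size_pairmap => lt_k; rewrite (nth_pairmap x) //.
  rewrite -[nth x p _]/(nth x (x :: p) k.+1) /path_edge_colour !pos ?(ltnW lt_k) //.
  by rewrite addnS (minn_idPl (leqnSn _)).
Qed.

Lemma nonrepetitive_colour_seqs_down (x : 'I_n) (p : seq 'I_n) :
  (forall k, k <= size p -> nth x (x :: p) k + k = x) -> nonrepetitive_colour_seqs x p.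
Proof.
move=> pos_add; have le_px : size p <= x by have := pos_add _ (leqnn _); lia.
have pos k : k <= size p -> nth x (x :: p) k = x - k :> nat.
  by move=> le_k; have := pos_add _ le_k; lia.
split.
- apply: (nonrepetitive_window_rev (c := x.*2) squarefree_total_colour).
    by rewrite size_total_seq; set len := size p in le_px *; lia.
  move=> k; rewrite size_total_seq => lt_k; rewrite (nth_total_seq _ _ x); last by lia.
  set len := size p in pos le_px lt_k *.
  rewrite /total_colour /interleave /path_edge_colour /path_vertex_colour pos; last by lia.
  have -> : odd (x.*2 - k) = odd k by lia.
  case: ifP => k_odd.
  + rewrite -[nth x p _]/(nth x (x :: p) k./2.+1) pos; last by lia.
    by rewrite (_ : minn _ _ = (x.*2 - k)./2) //; lia.
  + by have -> : (x.*2 - k)./2 = x - k./2 by lia.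
- apply: (nonrepetitive_window_rev (c := x) squarefree_vertex_colour).
    by rewrite size_map.
  by move=> k; rewrite size_map => lt_k; rewrite (nth_map x) // /path_vertex_colour pos.
- apply: (nonrepetitive_window_rev (c := x.-1) squarefree_edge_colour).
    by rewrite size_pairmap; lia.
  move=> k; rewrite size_pairmap => lt_k; rewrite (nth_pairmap x) //.
  rewrite -[nth x p _]/(nth x (x :: p) k.+1) /path_edge_colour !pos ?(ltnW lt_k) //.
  by rewrite (_ : minn _ _ = x.-1 - k) //; lia.
Qed.
End PathColouring.

Definition nonrepetitiveb (s : seq nat) : bool :=
  all (fun i => all (fun m =>
    (0 < m) && (i + 2 * m <= size s) ==> (take m (drop i s) != take m (drop (i + m) s)))
    (iota 0 (size s).+1)) (iota 0 (size s).+1).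

Lemma nonrepetitiveP s : reflect (nonrepetitive s) (nonrepetitiveb s).
Proof.
apply: (iffP allP) => [no_sq i m m_gt0 le_s|nonrep i _].
- have i_in : i \in iota 0 (size s).+1 by rewrite mem_iota; lia.
  have m_in : m \in iota 0 (size s).+1 by rewrite mem_iota; lia.
  by move: (no_sq i i_in) => /allP/(_ m m_in); rewrite m_gt0 le_s => /eqP.
- by apply/allP=> m _; apply/implyP=> /andP[m_gt0 le_s]; apply/eqP/nonrep.
Qed.

Fixpoint words (k n : nat) : seq (seq nat) :=
  if n is n'.+1 then [seq a :: w | a <- iota 0 k, w <- words k n'] else [:: [::]].

Lemma mem_words k w : all (fun a => a < k) w -> w \in words k (size w).
Proof.
elim: w => [|a w IHw] //= /andP[lt_ak /IHw w_in].
by apply/allpairsP; exists (a, w); rewrite mem_iota.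
Qed.

Definition path4_total_thue (w : seq nat) : bool :=
  if w is [:: a; b; c; d; e; f; g] then
    [&& nonrepetitiveb [:: a; e; b; f; c; g; d], nonrepetitiveb [:: a; b; c; d]
      & nonrepetitiveb [:: e; f; g]]
  else false.

Lemma path4_no_total_thue_3 : ~~ has path4_total_thue (words 3 7).
Proof. by vm_compute. Qed.

Lemma path_not_total_thue_colourable n j : 4 <= n -> j <= 3 ->
  ~ total_thue_colourable (path_adj n) j.
Proof.
move=> n_ge4 le_j3 [cv [ce [cv_lt [ce_lt [_ nonrep]]]]].
pose ord i (lt_i4 : i < 4) : 'I_n := Ordinal (leq_trans lt_i4 n_ge4).
set v0 := ord 0 isT; set v1 := ord 1 isT; set v2 := ord 2 isT; set v3 := ord 3 isT.
have [/nonrepetitiveP total /nonrepetitiveP vert /nonrepetitiveP edge] :=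
  nonrep v0 [:: v1; v2; v3] (conj isT isT).
suff: has path4_total_thue (words 3 7) by rewrite (negbTE path4_no_total_thue_3).
apply/hasP.
exists [:: cv v0; cv v1; cv v2; cv v3; ce v0 v1; ce v1 v2; ce v2 v3].
  apply: mem_words.
  by rewrite /= !(leq_trans (cv_lt _) le_j3) !(leq_trans (ce_lt _ _ _) le_j3).
by rewrite /= total vert edge.
Qed.

Lemma path_total_thue_colouring n :
  total_thue_colouring (path_adj n) 4 (@path_vertex_colour n) (@path_edge_colour n).
Proof.
split; [exact: vertex_colour_lt4 | split; [|split]].
- by move=> u v _; rewrite /path_edge_colour /edge_colour ltn_pmod.
- by move=> u v _; rewrite /path_edge_colour minnC.
- move=> x p /path_adj_monotone[].
  + exact: nonrepetitive_colour_seqs_up.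
  + exact: nonrepetitive_colour_seqs_down.
Qed.

Theorem theorem14 (n : nat) : 4 <= n ->
  exists k, is_piT 'I_n (path_adj n) k /\ 4 <= k <= 5.
Proof.
move=> n_ge4; exists 4; split=> //; split.
- exists (@path_vertex_colour n), (@path_edge_colour n).
  exact: path_total_thue_colouring.
- by move=> j lt_j4; apply: path_not_total_thue_colourable.
Qed.
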